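(* In the setup described in the context, for all vector fields $x,y$, $$\tilde\rho(x,y)=\rho(x,y)+\tfrac18(3\tilde\tau^*+\tilde\tau-3\tau-\tau^* )\,g(x,y)+\tfrac18(3\tilde\tau+\tilde\tau^*-3\tau^*-\tau)\,\tilde g(x,y).$$
   Context: Let $M$ be a 3-dimensional smooth manifold. Fix a coordinate chart $(x^1,x^2,x^3)$ with coordinate vector fields $\partial_i$. Structures: - $g$ is a Riemannian metric with $g(\partial_1,\partial_1)=g(\partial_2,\partial_2)=A$, $g(\partial_3,\partial_3)=B$ and $g(\partial_i,\partial_j)=0$ for $i\ne j$. Here $A,B$ are smooth positive functions. - $Q$ is the $(1,1)$-tensor field with $Q\partial_1=\partial_2$, $Q\partial_2=-\partial_1$, $Q\partial_3=\partial_3$. - $P=Q^2$. - $\tilde g(x,y)=g(x,Py)$ is the associated indefinite metric, with components $\mathrm{diag}(-A,-A,B)$. Connections and curvature: - $\nabla$ and $\tilde\nabla$ are the Levi-Civita connections of $g$ and $\tilde g$. - $R(x,y)z=\nabla_x\nabla_yz-\nabla_y\nabla_xz-\nabla_{[x,y]}z$ and $R(x,y,z,t)=g(R(x,y)z,t)$. Analogously $\tilde R$ is built from $\tilde\nabla$, with $\tilde R(x,y,z,t)=\tilde g(\tilde R(x,y)z,t)$. Ricci tensors and scalar quantities ($\{e_i\}$ a basis; $g^{ij}$ and $\tilde g^{ij}$ are the inverse matrices of $g_{ij}$ and $\tilde g_{ij}$): - $\rho(y,z)=g^{ij}R(e_i,y,z,e_j)$ and $\tau=g^{ij}\rho(e_i,e_j)$.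 - $\tilde\rho(y,z)=\tilde g^{ij}\tilde R(e_i,y,z,e_j)$ and $\tilde\tau=\tilde g^{ij}\tilde\rho(e_i,e_j)$. - $\tau^*=\tilde g^{ij}\rho(e_i,e_j)$ and $\tilde\tau^*=g^{ij}\tilde\rho(e_i,e_j)$. *)

From HB Require Import structures.
From mathcomp Require Import all_boot all_order all_algebra.
From mathcomp Require Import all_classical all_reals all_analysis.
Set Implicit Arguments. Unset Strict Implicit. Unset Printing Implicit Defensive.
Import Order.TTheory GRing.Theory Num.Theory.
Import numFieldNormedType.Exports.
Local Open Scope classical_set_scope.
Local Open Scope ring_scope.

Notation pt R := (matrix R 1 3) (only parsing).

Section Defs.
Variable R : realType.
Local Notation pt := (matrix R 1 3) (only parsing).

(* points of the coordinate chart (x^1,x^2,x^3), indices 0,1,2 *)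

Definition ev (i : 'I_3) : pt := delta_mx 0 i.

Definition pd (i : 'I_3) (f : pt -> R) : pt -> R := fun p => derive f p (ev i).

Definition iter_pd (s : seq 'I_3) (f : pt -> R) : pt -> R := foldr pd f s.

Definition smooth_on (U : set pt) (f : pt -> R) : Prop :=
  forall s : seq 'I_3, forall p, U p ->
    {for p, continuous (iter_pd s f)} /\
    (forall i, derivable (iter_pd s f) p (ev i)).

(* a metric field: components G p i j = G(\partial_i,\partial_j) at p *)
Definition metric_field := pt -> 'M[R]_3.

(* Christoffel symbols of the Levi-Civita connection:
   nabla_{d_i} d_j = sum_k Gamma k i j d_k *)
Definition Gamma (G : metric_field) (p : pt) (k i j : 'I_3) : R :=
  2^-1 * \sum_(l < 3) invmx (G p) k l *
    (pd i (fun q => G q j l) p + pd j (fun q => G q i l) p - pd l (fun q => G q i j) p).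

(* R(d_i,d_j) d_k = sum_l Rcoef l i j k d_l,
   with R(x,y)z = nabla_x nabla_y z - nabla_y nabla_x z - nabla_[x,y] z *)
Definition Rcoef (G : metric_field) (p : pt) (l i j k : 'I_3) : R :=
  pd i (fun q => Gamma G q l j k) p - pd j (fun q => Gamma G q l i k) p
  + \sum_(m < 3) (Gamma G p m j k * Gamma G p l i m - Gamma G p m i k * Gamma G p l j m).

(* R(d_i,d_j,d_k,d_t) = G(R(d_i,d_j)d_k, d_t) *)
Definition Rlow (G : metric_field) (p : pt) (i j k t : 'I_3) : R :=
  \sum_(l < 3) Rcoef G p l i j k * G p l t.

Definition Ricci (G : metric_field) (p : pt) (j k : 'I_3) : R :=
  \sum_(i < 3) \sum_(t < 3) invmx (G p) i t * Rlow G p i j k t.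

(* trace of the Ricci tensor of G with respect to the metric H:
   H^{ij} rho_G(d_i,d_j) *)
Definition scal (H G : metric_field) (p : pt) : R :=
  \sum_(i < 3) \sum_(j < 3) invmx (H p) i j * Ricci G p i j.

Definition bform (M : 'M[R]_3) (x y : pt) : R :=
  \sum_(i < 3) \sum_(j < 3) x 0 i * M i j * y 0 j.

(* the (1,1)-tensor Q: column j holds the components of Q d_j *)
Definition Qmx : 'M[R]_3 :=
  \matrix_(k < 3, j < 3)
    (if (k == 1%N :> nat) && (j == 0%N :> nat) then 1
     else if (k == 0%N :> nat) && (j == 1%N :> nat) then -1
     else if (k == 2%N :> nat) && (j == 2%N :> nat) then 1 else 0).

Definition Pmx : 'M[R]_3 := Qmx *m Qmx.

Definition gmet (A B : pt -> R) : metric_field :=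
  fun p => \matrix_(i < 3, j < 3)
    (if i == j then (if (i == 2%N :> nat) then B p else A p) else 0).

(* associated metric gt(x,y) = g(x, P y): components g(d_i, P d_j) *)
Definition gtil (A B : pt -> R) : metric_field := fun p => gmet A B p *m Pmx.

End Defs.

From HB Require Import structures.
From mathcomp Require Import all_boot all_order all_algebra.
From mathcomp Require Import all_classical all_reals all_analysis.
From mathcomp Require Import ring.
Set Implicit Arguments. Unset Strict Implicit. Unset Printing Implicit Defensive.
Import Order.TTheory GRing.Theory Num.Theory.
Import numFieldNormedType.Exports.
Local Open Scope classical_set_scope.
Local Open Scope ring_scope.

(* The associated metric is again diagonal: g~ = diag(-A, -A, B) is g with A replaced
   by -A.  For a diagonal metric the Ricci tensor is the contraction R^i_{ijk} of the
   curvature tensor, and the Christoffel symbols only involve the diagonal entries and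
   their first derivatives, so both rho and rho~ are explicit rational expressions in
   the 2-jets of A and B at the point.  The identity is then checked entry by entry as
   an identity of rational functions, the traces tau, tau~, tau*, tau~* being sums of
   diagonal entries of rho and rho~ divided by +-A and B. *)

Lemma sum3 (V : nmodType) (F : 'I_3 -> V) : \sum_(i < 3) F i = F 0 + F 1 + F 2.
Proof.
by rewrite !big_ord_recl big_ord0 addr0 addrA; congr (F _ + F _ + F _); exact: val_inj.
Qed.

Lemma ord3P (i : 'I_3) : [\/ i = 0, i = 1 | i = 2].
Proof.
by case: i => [[|[|[|//]]] h]; [apply: Or31 | apply: Or32 | apply: Or33]; exact: val_inj.
Qed.

Definition aab (T : Type) (a b : T) (k : 'I_3) : T := if k == 2%N :> nat then b else a.

Lemma aab_map (T U : Type) (f : T -> U) a b k : f (aab a b k) = aab (f a) (f b) k.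
Proof. by rewrite /aab; case: ifP. Qed.

(* The 2-jet of a diagonal metric diag(v 0, v 1, v 2) at a point:
   [d i k] stands for d_i v_k and [d2 m i k] for d_m d_i v_k. *)
Section DiagonalRicci.
Variable R : numFieldType.
Variables (v : 'I_3 -> R) (d : 'I_3 -> 'I_3 -> R) (d2 : 'I_3 -> 'I_3 -> 'I_3 -> R).

Definition diag_christoffel (k i j : 'I_3) : R :=
  2^-1 * ((v k)^-1 * ((if j == k then d i j else 0) + (if i == k then d j i else 0)
                      - (if i == j then d k i else 0))).

Definition diag_christoffel_deriv (m k i j : 'I_3) : R :=
  2^-1 * (- (v k)^-2 * d m k * ((if j == k then d i j else 0) + (if i == k then d j i else 0)
                                - (if i == j then d k i else 0))
          + (v k)^-1 * ((if j == k then d2 m i j else 0) + (if i == k then d2 m j i else 0)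
                        - (if i == j then d2 m k i else 0))).

Definition diag_riemann (l i j k : 'I_3) : R :=
  diag_christoffel_deriv i l j k - diag_christoffel_deriv j l i k
  + \sum_(m < 3) (diag_christoffel m j k * diag_christoffel l i m
                  - diag_christoffel m i k * diag_christoffel l j m).

Definition diag_ricci (j k : 'I_3) : R := \sum_(i < 3) diag_riemann i i j k.

End DiagonalRicci.

Section RicciAAB.
Variable R : numFieldType.
Variables (a b : R) (da db : 'I_3 -> R) (dda ddb : 'I_3 -> 'I_3 -> R).

(* Mixed second derivatives are independent variables here, so this is not
   symmetric as written. *)
Definition ricci_aab (i j : 'I_3) : R :=
  match nat_of_ord i, nat_of_ord j with
  | 0, 0 => (da 0 ^+ 2 + da 1 ^+ 2) / (2 * a ^+ 2) + (da 0 * db 0 - da 1 * db 1) / (4 * a * b)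
            - (dda 0 0 + dda 1 1) / (2 * a) + (da 2 * db 2 + db 0 ^+ 2) / (4 * b ^+ 2)
            - (dda 2 2 + ddb 0 0) / (2 * b)
  | 0, 1 => (da 0 * db 1 + da 1 * db 0) / (4 * a * b) + (dda 1 0 - dda 0 1) / (2 * a)
            + db 0 * db 1 / (4 * b ^+ 2) - ddb 0 1 / (2 * b)
  | 0, _ => da 0 * da 2 / (2 * a ^+ 2) + da 2 * db 0 / (4 * a * b) - dda 0 2 / (2 * a)
            + (ddb 2 0 - ddb 0 2) / (2 * b)
  | 1, 0 => (da 0 * db 1 + da 1 * db 0) / (4 * a * b) + (dda 0 1 - dda 1 0) / (2 * a)
            + db 0 * db 1 / (4 * b ^+ 2) - ddb 1 0 / (2 * b)
  | 1, 1 => (da 0 ^+ 2 + da 1 ^+ 2) / (2 * a ^+ 2) + (da 1 * db 1 - da 0 * db 0) / (4 * a * b)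
            - (dda 0 0 + dda 1 1) / (2 * a) + (da 2 * db 2 + db 1 ^+ 2) / (4 * b ^+ 2)
            - (dda 2 2 + ddb 1 1) / (2 * b)
  | 1, _ => da 1 * da 2 / (2 * a ^+ 2) + da 2 * db 1 / (4 * a * b) - dda 1 2 / (2 * a)
            + (ddb 2 1 - ddb 1 2) / (2 * b)
  | _, 0 => da 0 * da 2 / (2 * a ^+ 2) + da 2 * db 0 / (4 * a * b) + dda 0 2 / (2 * a)
            - dda 2 0 / a
  | _, 1 => da 1 * da 2 / (2 * a ^+ 2) + da 2 * db 1 / (4 * a * b) + dda 1 2 / (2 * a)
            - dda 2 1 / a
  | _, _ => da 2 ^+ 2 / (2 * a ^+ 2) + da 2 * db 2 / (2 * a * b)
            + (db 0 ^+ 2 + db 1 ^+ 2) / (4 * a * b) - dda 2 2 / a - (ddb 0 0 + ddb 1 1) / (2 * a)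
  end.

Lemma diag_ricci_aab (i j : 'I_3) : a != 0 -> b != 0 ->
  diag_ricci (aab a b) (fun m => aab (da m) (db m)) (fun m l => aab (dda m l) (ddb m l)) i j
  = ricci_aab i j.
Proof.
move=> a0 b0; rewrite /diag_ricci /diag_riemann /diag_christoffel_deriv /diag_christoffel !sum3.
case: (ord3P i) => ->; case: (ord3P j) => ->; rewrite /aab /ricci_aab /=;
  by field; rewrite a0 b0.
Qed.
End RicciAAB.

Definition diag_trace (R : fieldType) (w : 'I_3 -> R) (M : 'I_3 -> 'I_3 -> R) : R :=
  \sum_(i < 3) (w i)^-1 * M i i.

Section SignFlip.
Variable R : numFieldType.
Variables (a b : R) (da db : 'I_3 -> R) (dda ddb : 'I_3 -> 'I_3 -> R).
Hypotheses (a0 : a != 0) (b0 : b != 0).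
Local Notation r := (ricci_aab a b da db dda ddb).
Local Notation rt := (ricci_aab (- a) b (fun m => - da m) db (fun m l => - dda m l) ddb).
Local Notation w := (aab a b).
Local Notation wt := (aab (- a) b).

Lemma ricci_aab_opp (i j : 'I_3) :
  rt i j = r i j
    + 8^-1 * (3 * diag_trace w rt + diag_trace wt rt - 3 * diag_trace w r - diag_trace wt r)
      * (if i == j then w i else 0)
    + 8^-1 * (3 * diag_trace wt rt + diag_trace w rt - 3 * diag_trace wt r - diag_trace w r)
      * (if i == j then wt i else 0).
Proof.
rewrite /diag_trace !sum3.
by case: (ord3P i) => ->; case: (ord3P j) => ->; rewrite /aab /ricci_aab /=;
  field; rewrite a0 b0.
Qed.
End SignFlip.

Section DiagonalMatrix.
Variables (F : fieldType) (n : nat) (w : 'I_n -> F).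
Hypothesis w0 : forall i, w i != 0.
Local Notation D := (\matrix_(i, j) if i == j then w i else 0).
Local Notation E := (\matrix_(i, j) if i == j then (w i)^-1 else 0).

Lemma mul_diag_inv : D *m E = 1%:M.
Proof.
apply/matrixP => i j; rewrite !mxE (bigD1 i) //= big1 => [|l /negbTE li]; last first.
  by rewrite mxE eq_sym li mul0r.
by rewrite !mxE eqxx addr0; case: eqP; rewrite ?mulr0 // mulfV.
Qed.

Lemma unitmx_diag : D \in unitmx.
Proof. exact: (mulmx1_unit mul_diag_inv).1. Qed.

Lemma invmx_diag : invmx D = E.
Proof. by rewrite -[invmx D]mulmx1 -mul_diag_inv mulmxA mulVmx ?mul1mx ?unitmx_diag. Qed.
End DiagonalMatrix.

Lemma Ricci_contraction (R : realType) (G : metric_field R) p j k :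
  G p \in unitmx -> (G p)^T = G p -> Ricci G p j k = \sum_(i < 3) Rcoef G p i i j k.
Proof.
move=> Gu Gsym; rewrite /Ricci /Rlow; apply: eq_bigr => i _.
have dual l : \sum_(t < 3) G p l t * invmx (G p) i t = (l == i)%:R.
  have := congr1 (fun M : 'M[R]_3 => M l i) (mulmxV Gu).
  by rewrite -{2}Gsym -trmx_inv !mxE => <-; apply: eq_bigr => t _; rewrite !mxE.
transitivity (\sum_(l < 3) Rcoef G p l i j k * (l == i)%:R).
  under eq_bigr do rewrite mulr_sumr.
  rewrite exchange_big /=; apply: eq_bigr => l _; rewrite -dual mulr_sumr.
  by apply: eq_bigr => t _; ring.
by rewrite (bigD1 i) //= big1 => [|l /negbTE ->]; rewrite ?mulr0 // eqxx mulr1 addr0.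
Qed.

Section DiagonalMetric.
Variable R : realType.

Definition diag_metric (w : 'I_3 -> pt R -> R) : metric_field R :=
  fun q => \matrix_(i, j) if i == j then w i q else 0.

Definition twice_derivable_at (f : pt R -> R) (p : pt R) : Prop :=
  (forall m, derivable f p (ev R m)) /\ (forall i m, derivable (pd i f) p (ev R m)).

Variable w : 'I_3 -> pt R -> R.

Lemma pd_diag_metric i j l q :
  pd i (fun q => diag_metric w q j l) q = if j == l then pd i (w j) q else 0.
Proof.
have -> : (fun q => diag_metric w q j l) = if j == l then w j else cst 0.
  by apply: funext => q'; rewrite mxE; case: ifP.
by case: ifP => // _; rewrite /pd derive_cst.
Qed.

Lemma Gamma_diag q k i j : (forall l, w l q != 0) ->
  Gamma (diag_metric w) q k i j
  = diag_christoffel (fun l => w l q) (fun i l => pd i (w l) q) k i j.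
Proof.
move=> w0; rewrite /Gamma invmx_diag //.
rewrite (bigD1 k) //= big1 ?addr0 => [|l lk]; last by rewrite mxE eq_sym (negbTE lk) mul0r.
by rewrite mxE eqxx !pd_diag_metric.
Qed.

Lemma scal_diag (G : metric_field R) q : (forall l, w l q != 0) ->
  scal (diag_metric w) G q = diag_trace (fun l => w l q) (Ricci G q).
Proof.
move=> w0; rewrite /scal /diag_trace invmx_diag //; apply: eq_bigr => i _.
rewrite (bigD1 i) //= big1 ?addr0 => [|l il]; last by rewrite mxE eq_sym (negbTE il) mul0r.
by rewrite mxE eqxx.
Qed.

Variable p : pt R.
Hypothesis w0 : \forall q \near p, forall l, w l q != 0.
Hypothesis w2 : forall k, twice_derivable_at (w k) p.
Local Notation v := (fun k => w k p).
Local Notation d := (fun i k => pd i (w k) p).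
Local Notation d2 := (fun m i k => pd m (pd i (w k)) p).

Lemma pd_Gamma_diag m k i j :
  pd m (fun q => Gamma (diag_metric w) q k i j) p = diag_christoffel_deriv v d d2 m k i j.
Proof.
rewrite /pd (@near_eq_derive _ _ _ _
  (fun q => diag_christoffel (fun l => w l q) (fun i l => pd i (w l) q) k i j)); last first.
  by near=> q; rewrite Gamma_diag //; near: q.
set S1 := fun q => if j == k then pd i (w j) q else 0.
set S2 := fun q => if i == k then pd j (w i) q else 0.
set S3 := fun q => if i == j then pd k (w i) q else 0.
have -> : (fun q => diag_christoffel (fun l => w l q) (fun i l => pd i (w l) q) k i j)
          = cst 2^-1 * ((fun q => (w k q)^-1) * (S1 + S2 - S3)).
  by apply: funext => q; rewrite /diag_christoffel !fctE.
have dS (c : bool) l n : derivable (fun q => if c then pd n (w l) q else 0) p (ev R m).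
  by case: c; [exact: (w2 l).2 | exact: derivable_cst].
have wk0 : w k p != 0 by exact: (nbhs_singleton w0).
have dV : derivable (fun q => (w k q)^-1) p (ev R m) := derivableV wk0 ((w2 k).1 m).
have dS12 : derivable (S1 + S2) p (ev R m) := derivableD (dS _ _ _) (dS _ _ _).
have dS123 : derivable (S1 + S2 - S3) p (ev R m) := derivableB dS12 (dS _ _ _).
rewrite (deriveM (derivable_cst _ _ _) (derivableM dV dS123)) derive_cst.
rewrite (deriveM dV dS123) (deriveV wk0 ((w2 k).1 m)) (deriveB dS12 (dS _ _ _)).
rewrite (deriveD (dS _ _ _) (dS _ _ _)) /S1 /S2 /S3.
have derive_if (c : bool) (f : pt R -> R) :
    'D_(ev R m) (fun q => if c then f q else 0) p = if c then 'D_(ev R m) f p else 0.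
  by case: c; rewrite ?derive_cst.
rewrite !derive_if /diag_christoffel_deriv /pd !fctE /= scaler0 addr0 /GRing.scale /=.
by congr (_ * _); rewrite [LHS]addrC mulrC.
Unshelve. all: by end_near.
Qed.

Lemma Rcoef_diag l i j k : Rcoef (diag_metric w) p l i j k = diag_riemann v d d2 l i j k.
Proof.
rewrite /Rcoef /diag_riemann !pd_Gamma_diag; congr (_ + _); apply: eq_bigr => m _.
by rewrite !Gamma_diag //; exact: (nbhs_singleton w0).
Qed.

Lemma Ricci_diag j k : Ricci (diag_metric w) p j k = diag_ricci v d d2 j k.
Proof.
have wp0 := nbhs_singleton w0.
rewrite Ricci_contraction ?unitmx_diag //; last first.
  by apply/matrixP => a b; rewrite !mxE eq_sym; case: eqP => // ->.
by apply: eq_bigr => i _; rewrite Rcoef_diag.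
Qed.
End DiagonalMetric.

Section MetricAAB.
Variable R : realType.

Lemma gmetE (A B : pt R -> R) q i j :
  gmet A B q i j = if i == j then aab (A q) (B q) i else 0.
Proof. by rewrite mxE; case: (i == j) => //; rewrite /aab; case: ifP. Qed.

Lemma gmet_diag (A B : pt R -> R) : gmet A B = diag_metric (aab A B).
Proof.
apply: funext => q; apply/matrixP => i j.
by rewrite gmetE mxE (aab_map (fun f => f q)).
Qed.

Lemma scal_gmet (A B : pt R -> R) (G : metric_field R) q : A q != 0 -> B q != 0 ->
  scal (gmet A B) G q = diag_trace (aab (A q) (B q)) (Ricci G q).
Proof.
move=> A0 B0; rewrite gmet_diag scal_diag; last by move=> l; rewrite /aab; case: ifP.
by congr diag_trace; apply: funext => l; rewrite (aab_map (fun f => f q)).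
Qed.

Lemma gtil_gmet (A B : pt R -> R) : gtil A B = gmet (fun q => - A q) B.
Proof.
apply: funext => q; apply/matrixP => i j.
rewrite /gtil /Pmx /Qmx !mxE !sum3 !mxE !sum3 !mxE.
by case: (ord3P i) => ->; case: (ord3P j) => -> /=; ring.
Qed.

Lemma Ricci_gmet (A B : pt R -> R) p :
  (\forall q \near p, A q != 0 /\ B q != 0) ->
  twice_derivable_at A p -> twice_derivable_at B p ->
  Ricci (gmet A B) p
  = ricci_aab (A p) (B p) (fun i => pd i A p) (fun i => pd i B p)
      (fun m i => pd m (pd i A) p) (fun m i => pd m (pd i B) p).
Proof.
move=> AB0 A2 B2; have [A0 B0] := nbhs_singleton AB0.
apply/funext => j; apply/funext => k.
rewrite gmet_diag Ricci_diag; last by move=> l; rewrite /aab; case: ifP.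
  rewrite -diag_ricci_aab //.
  by congr diag_ricci; do ![apply: funext => ?]; rewrite /aab; case: ifP.
near=> q; have [Aq Bq] : A q != 0 /\ B q != 0 by near: q.
by move=> l; rewrite /aab; case: ifP.
Unshelve. all: by end_near.
Qed.
End MetricAAB.

Section Opposite.
Variables (R : realType) (f : pt R -> R) (p : pt R).
Hypothesis df : \forall q \near p, forall i, derivable f q (ev R i).

Lemma pd_opp_near i : \forall q \near p, pd i (fun q => - f q) q = - pd i f q.
Proof.
near=> q; have dfq : forall i, derivable f q (ev R i) by near: q.
exact: deriveN.
Unshelve. all: by end_near.
Qed.

Lemma pd_opp i : pd i (fun q => - f q) p = - pd i f p.
Proof. exact: (nbhs_singleton (pd_opp_near i)). Qed.

Lemma pd_pd_opp m i : derivable (pd i f) p (ev R m) ->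
  pd m (pd i (fun q => - f q)) p = - pd m (pd i f) p.
Proof. by move=> d2; rewrite /pd (near_eq_derive _ (pd_opp_near i)); exact: deriveN. Qed.

Lemma twice_derivable_opp : twice_derivable_at f p -> twice_derivable_at (fun q => - f q) p.
Proof.
move=> [d1 d2]; split=> [m | i m]; first exact: (derivableN (d1 m)).
apply: (near_eq_derivable _ (derivableN (d2 i m))).
by apply: filterS (pd_opp_near i) => q ->.
Qed.
End Opposite.

Lemma bform_combination (R : realType) (M N G1 G2 : 'M[R]_3) (c1 c2 : R) (x y : pt R) :
  (forall i j, M i j = N i j + c1 * G1 i j + c2 * G2 i j) ->
  bform M x y = bform N x y + c1 * bform G1 x y + c2 * bform G2 x y.
Proof.
move=> MN; rewrite /bform !mulr_sumr -!big_split; apply: eq_bigr => i _ /=.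
rewrite !mulr_sumr -!big_split; apply: eq_bigr => j _ /=.
by rewrite MN; ring.
Qed.

Theorem theorem4p2 (R : realType) (U : set (pt R)) (A B : pt R -> R)
  (hU : open U)
  (hA : smooth_on U A) (hB : smooth_on U B)
  (hApos : forall p, U p -> 0 < A p) (hBpos : forall p, U p -> 0 < B p)
  (x y : pt R -> pt R) :
  forall p, U p ->
    let g := gmet A B in
    let gt := gtil A B in
    let rho := Ricci g p in
    let rhot := Ricci gt p in
    let tau := scal g g p in
    let taut := scal gt gt p in
    let taus := scal gt g p in
    let tauts := scal g gt p in
    bform (\matrix_(i, j) rhot i j) (x p) (y p) =
      bform (\matrix_(i, j) rho i j) (x p) (y p)
      + 8^-1 * (3 * tauts + taut - 3 * tau - taus) * bform (g p) (x p) (y p)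
      + 8^-1 * (3 * taut + tauts - 3 * taus - tau) * bform (gt p) (x p) (y p).
Proof.
move=> p Up g gt rho rhot tau taut taus tauts.
have Unear : \forall q \near p, U q by apply: open_nbhs_nbhs.
have twice f : smooth_on U f -> twice_derivable_at f p.
  by move=> hf; split=> [|i]; [exact: (hf [::] p Up).2 | exact: (hf [:: i] p Up).2].
have AB0 : \forall q \near p, A q != 0 /\ B q != 0.
  by apply: filterS Unear => q Uq; rewrite !gt_eqF ?hApos ?hBpos.
have AB0' : \forall q \near p, - A q != 0 /\ B q != 0.
  by apply: filterS AB0 => q; rewrite oppr_eq0.
have dA : \forall q \near p, forall i, derivable A q (ev R i).
  by apply: filterS Unear => q Uq i; exact: (hA [::] q Uq).2.
have [A0 B0] := nbhs_singleton AB0.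
have rhoE : Ricci (gmet A B) p
    = ricci_aab (A p) (B p) (fun i => pd i A p) (fun i => pd i B p)
        (fun m i => pd m (pd i A) p) (fun m i => pd m (pd i B) p).
  exact: Ricci_gmet AB0 (twice A hA) (twice B hB).
have rhotE : Ricci (gmet (fun q => - A q) B) p
    = ricci_aab (- A p) (B p) (fun i => - pd i A p) (fun i => pd i B p)
        (fun m i => - pd m (pd i A) p) (fun m i => pd m (pd i B) p).
  rewrite (Ricci_gmet AB0' _ (twice B hB)); last first.
    exact: twice_derivable_opp (twice A hA).
  congr ricci_aab; do ![apply: funext => ?]; first exact: pd_opp.
  by rewrite pd_pd_opp //; exact: (twice A hA).2.
rewrite /rho /rhot /tau /taut /taus /tauts /gt /g gtil_gmet.
rewrite !scal_gmet ?oppr_eq0 // rhoE rhotE.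
apply: bform_combination => i j; rewrite !gmetE !mxE.
exact: ricci_aab_opp.
Qed.
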